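(* Let $E$ be a topological space and $C:E\to 2^E$ a constraint function. Let $\mathcal{U}$ and $\mathcal{V}$ be collections of subsets of $E$ such that $\mathcal{U}$ is a refinement of $\mathcal{V}$, i.e. each $U\in\mathcal{U}$ is a subset of some $V\in\mathcal{V}$. Then this induces an order preserving function $TP_C(\mathcal{U})\to TP_C(\mathcal{V})$: namely, for any function $\phi:\mathcal{U}\to\mathcal{V}$ with $A\subseteq\phi(A)$ for all $A\in\mathcal{U}$, the assignment $[A]\mapsto[\phi(A)]$ is a well-defined order preserving map $TP_C(\mathcal{U})\to TP_C(\mathcal{V})$.
   Context: A set-valued function $C:E\to 2^E$ on a topological space $E$ is a constraint function if $x\in C(x)$ for all $x\in E$ and $C$ is lower semicontinuous: for every open $U\subseteq E$ the set $\{x\in E: C(x)\cap U\neq\emptyset\}$ is open. For $U\subseteq E$ write $C(U)=\bigcup_{x\in U}C(x)$. For subsets $A,B\subseteq E$ write $A\prec B$ if for every open set $U$ containing $A$, $C(U)\cap B\neq\emptyset$. Given a collection $\mathcal{U}$ of subsets of $E$, the constraint graph $TG_C(\mathcal{U})$ is the directed graph with vertex set $\mathcal{U}$ and an edge $(A,B)$ whenever $A\prec B$. The tracklet poset $TP_C(\mathcal{U})$ is the set of equivalence classes $[A]$ of the preorder given by the transitive closure of the edge relation of $TG_C(\mathcal{U})$ (where $A,B$ are equivalent if each precedes the other in the transitive closure), ordered by $[A]\le[B]$ iff $A$ precedes $B$ in the transitive closure. *)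

From HB Require Import structures.
From mathcomp Require Import all_boot all_order.
From mathcomp Require Import all_classical topology.
From Stdlib Require Import Relations.
Set Implicit Arguments. Unset Strict Implicit. Unset Printing Implicit Defensive.
Local Open Scope classical_set_scope.

(* C : E -> 2^E is a constraint function: x \in C x, and C is lower
   semicontinuous. *)
Definition constraint_function (E : topologicalType) (C : E -> set E) : Prop :=
  (forall x, C x x) /\
  (forall U : set E, open U -> open [set x | C x `&` U !=set0]).

Definition Cimg (E : topologicalType) (C : E -> set E) (U : set E) : set E :=
  \bigcup_(x in U) C x.

Definition prec (E : topologicalType) (C : E -> set E) (A B : set E) : Prop :=
  forall U : set E, open U -> A `<=` U -> Cimg C U `&` B !=set0.

Definition tg_edge (E : topologicalType) (C : E -> set E) (Us : set (set E))
  (A B : set E) : Prop := Us A /\ Us B /\ prec C A B.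

(* the preorder of TP_C(Us): (reflexive-)transitive closure of the edges;
   only used on members of Us *)
Definition tp_le (E : topologicalType) (C : E -> set E) (Us : set (set E))
  (A B : set E) : Prop := clos_refl_trans (set E) (tg_edge C Us) A B.

Definition tp_equiv (E : topologicalType) (C : E -> set E) (Us : set (set E))
  (A B : set E) : Prop := tp_le C Us A B /\ tp_le C Us B A.

From mathcomp Require Import all_boot all_order.
From mathcomp Require Import all_classical topology.
From Stdlib Require Import Relations.
Local Open Scope classical_set_scope.

(* The relation [A ≺ B] is monotone in both arguments: enlarging [A] leaves
   fewer open neighbourhoods to test, enlarging [B] makes each test easier.
   Hence [phi], which enlarges every vertex, maps edges of TG_C(Us) to edges
   of TG_C(Vs), and therefore the transitive closure to the transitive
   closure. *)

Lemma clos_refl_trans_map (T T' : Type) (R : relation T) (R' : relation T')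
    (f : T -> T') :
  (forall x y, R x y -> R' (f x) (f y)) ->
  forall x y, clos_refl_trans T R x y -> clos_refl_trans T' R' (f x) (f y).
Proof.
move=> fR x y; elim=> [a b /fR|a|a b c _ IHab _ IHbc].
- exact: rt_step.
- exact: rt_refl.
- exact: rt_trans IHab IHbc.
Qed.

Lemma prec_subset (E : topologicalType) (C : E -> set E) (A A' B B' : set E) :
  A `<=` A' -> B `<=` B' -> prec C A B -> prec C A' B'.
Proof.
move=> AA' BB' precAB U oU A'U.
have [z [CUz Bz]] := precAB U oU (subset_trans AA' A'U).
by exists z; split; [|exact: BB'].
Qed.

Section EnlargingMap.
Variables (E : topologicalType) (C : E -> set E) (Us Vs : set (set E)).
Variable phi : set E -> set E.
Hypothesis phi_in : forall A, Us A -> Vs (phi A).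
Hypothesis phi_ge : forall A, Us A -> A `<=` phi A.

Lemma tg_edge_enlarge A B : tg_edge C Us A B -> tg_edge C Vs (phi A) (phi B).
Proof.
move=> [UsA [UsB precAB]]; split; [exact: phi_in|split; [exact: phi_in|]].
by apply: prec_subset precAB; apply: phi_ge.
Qed.

Lemma tp_le_enlarge A B : tp_le C Us A B -> tp_le C Vs (phi A) (phi B).
Proof. exact/clos_refl_trans_map/tg_edge_enlarge. Qed.

Lemma tp_equiv_enlarge A B :
  tp_equiv C Us A B -> tp_equiv C Vs (phi A) (phi B).
Proof. by move=> [leAB leBA]; split; apply: tp_le_enlarge. Qed.

End EnlargingMap.

Theorem proposition1 (E : topologicalType) (C : E -> set E)
  (Us Vs : set (set E)) :
  constraint_function C ->
  (forall A, Us A -> exists2 V, Vs V & A `<=` V) ->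
  forall phi : set E -> set E,
    (forall A, Us A -> Vs (phi A)) ->
    (forall A, Us A -> A `<=` phi A) ->
    (* well defined on equivalence classes *)
    (forall A B, Us A -> Us B -> tp_equiv C Us A B ->
       tp_equiv C Vs (phi A) (phi B)) /\
    (* order preserving *)
    (forall A B, Us A -> Us B -> tp_le C Us A B ->
       tp_le C Vs (phi A) (phi B)).
Proof.
move=> _ _ phi phi_in phi_ge; split=> A B _ _.
- exact: tp_equiv_enlarge.
- exact: tp_le_enlarge.
Qed.
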